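(* Let $\beta_0,n,\delta,\gamma,r>0$, $k=2e^{-\gamma r}$, and assume $\frac{\beta_0}{\delta}(k-1)=1$. Consider $$\dot{x}(t)=-\Big[\frac{\beta_0}{1+x(t)^n}+\delta\Big]x(t)+k\,\frac{\beta_0\,x(t-r)}{1+x(t-r)^n}$$ with initial data $x=\phi$ on $[-r,0]$. Then the equilibrium $x_1=0$ is stable in the following sense: for every $\varepsilon>0$ there exists $\eta>0$ such that for every continuous $\phi:[-r,0]\to[0,\infty)$ with $\sup_{s\in[-r,0]}|\phi(s)|<\eta$, the solution satisfies $0\le x(t,\phi)<\varepsilon$ for all $t>0$.
   Context: $x(t,\phi)$ denotes the (unique, global, nonnegative) solution with initial function $\phi$. *)

From Stdlib Require Import Reals Lra.
Open Scope R_scope.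

(* Real power x^a for a real exponent a > 0, used for x >= 0.
   Convention: rpow x a = x^a for x > 0 and 0 for x <= 0
   (for x = 0 this is the true value 0^a = 0 since a > 0;
    solutions are nonnegative so the value for x < 0 is immaterial). *)
Definition rpow (x a : R) : R :=
  if Rlt_dec 0 x then Rpower x a else 0.

Definition cont_on_closed (f : R -> R) (a b : R) : Prop :=
  forall t, a <= t <= b ->
    forall e, 0 < e -> exists d, 0 < d /\
      forall s, a <= s <= b -> Rabs (s - t) < d -> Rabs (f s - f t) < e.

Definition cont_on_from (f : R -> R) (a : R) : Prop :=
  forall t, a <= t ->
    forall e, 0 < e -> exists d, 0 < d /\
      forall s, a <= s -> Rabs (s - t) < d -> Rabs (f s - f t) < e.

Definition dde_rhs (beta0 n delta k : R) (xt xtr : R) : R :=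
  - (beta0 / (1 + rpow xt n) + delta) * xt
  + k * (beta0 * xtr / (1 + rpow xtr n)).

Definition is_solution (beta0 n delta k r : R) (phi x : R -> R) : Prop :=
  (forall t, -r <= t <= 0 -> x t = phi t) /\
  cont_on_from x (-r) /\
  (forall t, 0 < t ->
     derivable_pt_lim x t (dde_rhs beta0 n delta k (x t) (x (t - r)))).

(* Write f(u) = beta0 u / (1 + u^n), so that the equation reads
   x' = -beta0 x/(1+x^n) - delta x + k f(x(t-r)).  Solutions with nonnegative
   data stay nonnegative: at a first negative minimum the right-hand side would
   be positive.  Along a nonnegative solution the Lyapunov functional
   V(t) = x(t) + k \int_{t-r}^t f(x(s)) ds has derivative
   (k-1) f(x) - delta x = delta (x/(1+x^n) - x) <= 0, using beta0 (k-1) = delta.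
   Hence x(t) <= V(t) <= V(0) <= phi(0) + k beta0 r sup phi, and a small initial
   function yields a small solution. *)
From Stdlib Require Import Reals Lra.
Open Scope R_scope.

Lemma continuity_pt_of_eps (h : R -> R) s :
  (forall e, 0 < e -> exists d, 0 < d /\
     forall y, Rabs (y - s) < d -> Rabs (h y - h s) < e) ->
  continuity_pt h s.
Proof.
  intros H e He. destruct (H e He) as [d [Hd Hy]].
  exists d; split; [exact Hd|]. intros y [_ Hys]. apply Hy, Hys.
Qed.

Lemma MVT_lim (h h' : R -> R) a b : a < b ->
  (forall c, a <= c <= b -> continuity_pt h c) ->
  (forall c, a < c < b -> derivable_pt_lim h c (h' c)) ->
  exists c, a < c < b /\ h b - h a = h' c * (b - a).
Proof.
  intros Hab Hc Hd.
  pose (pr := fun c (P : a < c < b) =>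
    exist (fun l => derivable_pt_lim h c l) (h' c) (Hd c P)).
  destruct (MVT h id a b pr (fun c _ => derivable_pt_id c) Hab Hc) as [c [P E]].
  { intros; apply derivable_continuous_pt, derivable_pt_id. }
  exists c; split; [exact P|].
  rewrite (derive_pt_eq_0 h c (h' c) (pr c P) (Hd c P)) in E.
  rewrite (derive_pt_eq_0 id c 1 _ (derivable_pt_lim_id c)) in E.
  unfold id in E. lra.
Qed.

Lemma increment_le_of_derive_le (h h' : R -> R) a b M : a <= b ->
  (forall c, a <= c <= b -> continuity_pt h c) ->
  (forall c, a < c < b -> derivable_pt_lim h c (h' c)) ->
  (forall c, a < c < b -> h' c <= M) ->
  h b - h a <= M * (b - a).
Proof.
  intros Hab Hc Hd HM. destruct (Req_dec a b) as [<-|Hne]; [lra|].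
  destruct (MVT_lim h h' a b ltac:(lra) Hc Hd) as [c [Hcab ->]].
  apply Rmult_le_compat_r; [lra | apply HM, Hcab].
Qed.

Lemma increment_ge_of_derive_ge (h h' : R -> R) a b m : a <= b ->
  (forall c, a <= c <= b -> continuity_pt h c) ->
  (forall c, a < c < b -> derivable_pt_lim h c (h' c)) ->
  (forall c, a < c < b -> m <= h' c) ->
  m * (b - a) <= h b - h a.
Proof.
  intros Hab Hc Hd Hm. destruct (Req_dec a b) as [<-|Hne]; [lra|].
  destruct (MVT_lim h h' a b ltac:(lra) Hc Hd) as [c [Hcab ->]].
  apply Rmult_le_compat_r; [lra | apply Hm, Hcab].
Qed.

Lemma continuous_antiderivative (g : R -> R) a b : a <= b ->
  (forall s, continuity_pt g s) ->
  exists P, forall s, a <= s <= b -> derivable_pt_lim P s (g s).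
Proof.
  intros Hab Hg.
  assert (C0 : forall s, a <= s <= b -> continuity_pt g s) by (intros; apply Hg).
  exists (primitive Hab (FTC_P1 Hab C0)). intros s Hs.
  apply RiemannInt_P28, Hs.
Qed.

Lemma derivable_pt_lim_pos_left (h : R -> R) c l a : a < c ->
  derivable_pt_lim h c l -> 0 < l ->
  exists y, a <= y < c /\ h y < h c.
Proof.
  intros Hac Hd Hl. destruct (Hd l Hl) as [del Hdel].
  pose proof (cond_pos del) as Hdel0.
  set (u := Rmin (del / 2) (c - a)).
  assert (Hu : 0 < u <= del / 2 /\ u <= c - a).
  { unfold u; repeat split; [apply Rmin_glb_lt; lra | apply Rmin_l | apply Rmin_r]. }
  assert (Hu0 : - u <> 0) by lra.
  assert (Hud : Rabs (- u) < del) by (rewrite Rabs_Ropp, Rabs_pos_eq; lra).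
  specialize (Hdel (- u) Hu0 Hud).
  exists (c + - u). split; [lra|].
  set (q := (h (c + - u) - h c) / - u) in *.
  assert (Hq : 0 < q) by (apply Rabs_def2 in Hdel; lra).
  assert (E : h (c + - u) - h c = q * - u) by (unfold q; field; lra).
  nra.
Qed.

Lemma cont_on_from_continuity_pt (x : R -> R) a t :
  cont_on_from x a -> a < t -> continuity_pt x t.
Proof.
  intros Hx Ht. apply continuity_pt_of_eps. intros e He.
  destruct (Hx t ltac:(lra) e He) as [d [Hd H]].
  exists (Rmin d (t - a)). split; [apply Rmin_glb_lt; lra|].
  intros y Hy. pose proof (Rmin_l d (t - a)); pose proof (Rmin_r d (t - a)).
  apply H; [apply Rabs_def2 in Hy; lra | lra].
Qed.

Lemma continuity_pt_clamp (x : R -> R) a s :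
  cont_on_from x a -> continuity_pt (fun s => x (Rmax s a)) s.
Proof.
  intros Hx. apply continuity_pt_of_eps. intros e He.
  destruct (Hx (Rmax s a) (Rmax_r _ _) e He) as [d [Hd H]].
  exists d; split; [exact Hd|]. intros y Hy. apply H; [apply Rmax_r|].
  eapply Rle_lt_trans; [|exact Hy].
  unfold Rmax; destruct (Rle_dec y a), (Rle_dec s a); split_Rabs; lra.
Qed.

Lemma rpow_ge0 u n : 0 <= rpow u n.
Proof.
  unfold rpow; destruct (Rlt_dec 0 u); [left; apply exp_pos | lra].
Qed.

Lemma rpow_nonpos u n : u <= 0 -> rpow u n = 0.
Proof. intros; unfold rpow; destruct (Rlt_dec 0 u); lra. Qed.

Definition hill (b0 n u : R) : R := b0 * u / (1 + rpow u n).

Lemma dde_rhs_hill b0 n d k X Y :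
  dde_rhs b0 n d k X Y = - (b0 / (1 + rpow X n) + d) * X + k * hill b0 n Y.
Proof. reflexivity. Qed.

Lemma hill_bounds b0 n u : 0 <= b0 -> 0 <= u -> 0 <= hill b0 n u <= b0 * u.
Proof.
  intros Hb Hu. unfold hill. pose proof (rpow_ge0 u n).
  assert (0 <= b0 * u) by nra.
  split.
  - apply Rmult_le_pos; [lra | left; apply Rinv_0_lt_compat; lra].
  - apply Rmult_le_reg_r with (1 + rpow u n); [lra|].
    replace (b0 * u / (1 + rpow u n) * (1 + rpow u n)) with (b0 * u)
      by (field; lra).
    nra.
Qed.

Lemma Rabs_hill_le b0 n u : Rabs (hill b0 n u) <= Rabs b0 * Rabs u.
Proof.
  unfold hill, Rdiv. pose proof (rpow_ge0 u n).
  rewrite !Rabs_mult, Rabs_inv, (Rabs_pos_eq (1 + rpow u n)) by lra.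
  assert (0 < / (1 + rpow u n) <= 1).
  { split; [apply Rinv_0_lt_compat; lra|].
    rewrite <- Rinv_1. apply Rinv_le_contravar; lra. }
  assert (0 <= Rabs b0 * Rabs u) by (apply Rmult_le_pos; apply Rabs_pos).
  nra.
Qed.

Lemma hill_continuity_pt b0 n u : continuity_pt (hill b0 n) u.
Proof.
  assert (Hid : continuity_pt id u) by apply derivable_continuous_pt, derivable_pt_id.
  destruct (Rtotal_order u 0) as [Hu|[->|Hu]].
  - apply continuity_pt_locally_ext with (f := fun v => b0 * v / (1 + 0)) (a := - u);
      [lra | |].
    + intros y Hy. unfold Rdist in Hy. apply Rabs_def2 in Hy.
      unfold hill. rewrite rpow_nonpos by lra. reflexivity.
    + assert (Hc : forall c : R, continuity_pt (fun _ => c) u)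
        by (intros c; apply continuity_pt_const; intros ? ?; reflexivity).
      apply continuity_pt_div; [apply continuity_pt_mult; [apply Hc | exact Hid]
                               | apply Hc | lra].
  - apply continuity_pt_of_eps. intros e He.
    pose proof (Rabs_pos b0).
    exists (e / (Rabs b0 + 1)). split; [apply Rdiv_lt_0_compat; lra|].
    intros y Hy. rewrite Rminus_0_r in Hy.
    replace (hill b0 n 0) with 0 by (unfold hill; field; rewrite rpow_nonpos; lra).
    rewrite Rminus_0_r.
    apply Rle_lt_trans with (1 := Rabs_hill_le b0 n y).
    assert (Rabs y * (Rabs b0 + 1) < e).
    { apply Rmult_lt_reg_r with (/ (Rabs b0 + 1)); [apply Rinv_0_lt_compat; lra|].
      rewrite Rmult_assoc, Rinv_r by lra. lra. }
    pose proof (Rabs_pos y). nra.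
  - apply continuity_pt_locally_ext
      with (f := fun v => b0 * v / (1 + Rpower v n)) (a := u); [lra | |].
    + intros y Hy. unfold Rdist in Hy. apply Rabs_def2 in Hy. unfold hill, rpow.
      destruct (Rlt_dec 0 y); [reflexivity | lra].
    + assert (Hpow : continuity_pt (fun v => Rpower v n) u).
      { apply derivable_continuous_pt.
        exists (n * Rpower u (n - 1)). apply derivable_pt_lim_power, Hu. }
      assert (0 < Rpower u n) by apply exp_pos.
      apply continuity_pt_div; [apply continuity_pt_mult | apply continuity_pt_plus | lra];
        [apply continuity_pt_const; intros ? ?; reflexivity | exact Hid
        | apply continuity_pt_const; intros ? ?; reflexivity | exact Hpow].
Qed.

Lemma dde_rhs_pos_of_neg b0 n d k X Y : 0 < b0 -> 0 < d -> 0 <= k ->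
  X < 0 -> 0 <= Y -> 0 < dde_rhs b0 n d k X Y.
Proof.
  intros Hb Hd Hk HX HY. rewrite dde_rhs_hill, rpow_nonpos by lra.
  pose proof (hill_bounds b0 n Y ltac:(lra) HY).
  replace (b0 / (1 + 0)) with b0 by field. nra.
Qed.

(* V' along the solution; the delayed terms k f(x(t-r)) cancel. *)
Lemma lyapunov_derivative_nonpos b0 n d k X Y : 0 <= d ->
  b0 * (k - 1) = d -> 0 <= X ->
  dde_rhs b0 n d k X Y + k * (hill b0 n X - hill b0 n Y) <= 0.
Proof.
  intros Hd Hk HX. rewrite dde_rhs_hill.
  pose proof (rpow_ge0 X n); pose proof (rpow_ge0 Y n).
  set (q := X / (1 + rpow X n)).
  assert (Hq : q <= X).
  { unfold q. apply Rmult_le_reg_r with (1 + rpow X n); [lra|].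
    replace (X / (1 + rpow X n) * (1 + rpow X n)) with X by (field; lra). nra. }
  replace (- (b0 / (1 + rpow X n) + d) * X + k * hill b0 n Y +
           k * (hill b0 n X - hill b0 n Y))
    with (b0 * (k - 1) * q - d * X) by (unfold q, hill; field; lra).
  rewrite Hk. nra.
Qed.

Section Solution.

Variables (b0 n d k r : R) (phi x : R -> R).
Hypotheses (Hb0 : 0 < b0) (Hd : 0 < d) (Hk : 0 <= k) (Hr : 0 < r).
Hypothesis Hphi : forall s, - r <= s <= 0 -> 0 <= phi s.
Hypothesis Hsol : is_solution b0 n d k r phi x.

Lemma solution_nonneg_step a : 0 <= a ->
  (forall s, - r <= s <= a -> 0 <= x s) ->
  forall t, - r <= t <= a + r -> 0 <= x t.
Proof.
  destruct Hsol as [_ [Hc Hder]]. intros Ha IH t Ht.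
  destruct (Rle_dec t a) as [Hle|Hgt]; [apply IH; lra|].
  destruct (Rle_lt_dec 0 (x t)) as [Hx|Hx]; [exact Hx|]. exfalso.
  destruct (continuity_ab_min x a t) as [c [Hmin Hcab]]; [lra| |].
  { intros c Hc'. apply (cont_on_from_continuity_pt x (- r)); [exact Hc | lra]. }
  assert (Hxc : x c < 0) by (specialize (Hmin t ltac:(lra)); lra).
  assert (Hxa : 0 <= x a) by (apply IH; lra).
  assert (Hac : a < c) by (destruct (Req_dec a c) as [<-|]; lra).
  assert (Hxr : 0 <= x (c - r)) by (apply IH; lra).
  pose proof (dde_rhs_pos_of_neg b0 n d k _ _ Hb0 Hd Hk Hxc Hxr) as Hl.
  destruct (derivable_pt_lim_pos_left x c _ a Hac (Hder c ltac:(lra)) Hl)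
    as [y [Hy1 Hy2]].
  specialize (Hmin y ltac:(lra)). lra.
Qed.

Lemma solution_nonneg t : - r <= t -> 0 <= x t.
Proof.
  destruct Hsol as [Hin _].
  assert (Ind : forall m : nat, forall t, - r <= t <= INR m * r -> 0 <= x t).
  { induction m as [|m IH]; intros s Hs.
    - simpl in Hs. rewrite Hin by lra. apply Hphi; lra.
    - pose proof (pos_INR m).
      apply (solution_nonneg_step (INR m * r)); [nra | exact IH |].
      rewrite S_INR in Hs. lra. }
  intros Ht. destruct (INR_unbounded (t / r)) as [m Hm].
  apply (Ind m). split; [exact Ht|].
  apply Rmult_gt_compat_r with (r := r) in Hm; [|exact Hr].
  unfold Rdiv in Hm. rewrite Rmult_assoc, Rinv_l in Hm by lra. lra.
Qed.

Hypothesis Hkd : b0 * (k - 1) = d.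

Lemma solution_le_lyapunov_bound M :
  (forall s, - r <= s <= 0 -> phi s <= M) ->
  forall t, 0 < t -> x t <= phi 0 + k * (b0 * M * r).
Proof.
  intros HM t Ht. pose proof Hsol as [Hin [Hc Hder]].
  (* Clamping at -r makes G continuous on all of R, so it has a primitive P;
     P(s) - P(s-r) stands for the integral in V. *)
  set (G := fun s => hill b0 n (x (Rmax s (- r)))).
  assert (HG : forall s, - r <= s -> G s = hill b0 n (x s))
    by (intros s Hs; unfold G; rewrite Rmax_left by lra; reflexivity).
  destruct (continuous_antiderivative G (- r - 1) (t + 1) ltac:(lra)) as [P HP].
  { intros s. apply (continuity_pt_comp (fun s => x (Rmax s (- r))) (hill b0 n)).
    - apply continuity_pt_clamp, Hc.
    - apply hill_continuity_pt. }
  assert (HPc : forall s, - r - 1 < s < t + 1 -> continuity_pt P s).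
  { intros s Hs. apply derivable_continuous_pt. exists (G s). apply HP; lra. }
  assert (Hwin_t : 0 * r <= P t - P (t - r)).
  { replace r with (t - (t - r)) at 1 by ring.
    apply (increment_ge_of_derive_ge P G); [lra | intros; apply HPc; lra
          | intros; apply HP; lra |].
    intros c Hc'. rewrite HG by lra.
    apply hill_bounds, solution_nonneg; lra. }
  assert (Hwin_0 : P 0 - P (- r) <= b0 * M * r).
  { replace r with (0 - - r) at 2 by ring.
    apply (increment_le_of_derive_le P G); [lra | intros; apply HPc; lra
          | intros; apply HP; lra |].
    intros c Hc'. rewrite HG, Hin by lra.
    pose proof (hill_bounds b0 n (phi c) ltac:(lra) (Hphi c ltac:(lra))).
    pose proof (HM c ltac:(lra)). nra. }
  set (V := fun s => x s + k * (P s - P (s - r))).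
  assert (HV : V t - V 0 <= 0 * (t - 0)).
  { apply (increment_le_of_derive_le V
      (fun c => dde_rhs b0 n d k (x c) (x (c - r)) + k * (G c - G (c - r) * 1)));
      [lra | | |].
    - intros c Hc'. unfold V.
      apply continuity_pt_plus;
        [apply (cont_on_from_continuity_pt x (- r)); [exact Hc | lra] |].
      apply continuity_pt_mult; [apply continuity_pt_const; intros ? ?; reflexivity |].
      apply continuity_pt_minus; [apply HPc; lra |].
      apply (continuity_pt_comp (fun s => s - r) P); [| apply HPc; lra].
      apply continuity_pt_minus; [apply derivable_continuous_pt, derivable_pt_id
                                 | apply continuity_pt_const; intros ? ?; reflexivity].
    - intros c Hc'. unfold V. apply derivable_pt_lim_plus; [apply Hder; lra|].
      apply derivable_pt_lim_scal, derivable_pt_lim_minus; [apply HP; lra|].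
      apply (derivable_pt_lim_comp (fun s => s - r) P); [|apply HP; lra].
      replace 1 with (1 - 0) by ring.
      apply derivable_pt_lim_minus; [apply derivable_pt_lim_id | apply derivable_pt_lim_const].
    - intros c Hc'. rewrite Rmult_1_r, !HG by lra.
      apply lyapunov_derivative_nonpos; [lra | exact Hkd | apply solution_nonneg; lra]. }
  unfold V in HV. replace (0 - r) with (- r) in HV by ring.
  rewrite (Hin 0) in HV by lra.
  assert (k * (P 0 - P (- r)) <= k * (b0 * M * r)) by (apply Rmult_le_compat_l; lra).
  assert (0 <= k * (P t - P (t - r))) by (apply Rmult_le_pos; lra).
  lra.
Qed.

End Solution.

Theorem mainTheorem4 :
  forall beta0 n delta gamma r : R,
    0 < beta0 -> 0 < n -> 0 < delta -> 0 < gamma -> 0 < r ->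
    (beta0 / delta) * (2 * exp (- (gamma * r)) - 1) = 1 ->
    forall eps : R, 0 < eps ->
      exists eta : R, 0 < eta /\
        forall phi x : R -> R,
          cont_on_closed phi (- r) 0 ->
          (forall s, - r <= s <= 0 -> 0 <= phi s) ->
          (forall s, - r <= s <= 0 -> Rabs (phi s) < eta) ->
          is_solution beta0 n delta (2 * exp (- (gamma * r))) r phi x ->
          forall t, 0 < t -> 0 <= x t < eps.
Proof.
  intros b0 n d g r Hb _ Hd _ Hr Hcond eps Heps.
  set (k := 2 * exp (- (g * r))) in *.
  assert (Hkd : b0 * (k - 1) = d).
  { replace (b0 * (k - 1)) with ((b0 / d) * (k - 1) * d) by (field; lra).
    rewrite Hcond; ring. }
  assert (Hk : 0 < k) by (unfold k; pose proof (exp_pos (- (g * r))); lra).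
  assert (Hden : 0 < 1 + k * b0 * r) by (pose proof (Rmult_lt_0_compat _ _ Hk Hb); nra).
  exists (eps / (1 + k * b0 * r)). split; [apply Rdiv_lt_0_compat; lra|].
  intros phi x _ Hphi Hsmall Hsol t Ht.
  assert (Hlt : forall s, - r <= s <= 0 -> phi s < eps / (1 + k * b0 * r))
    by (intros s Hs; specialize (Hsmall s Hs); apply Rabs_def2 in Hsmall; lra).
  split; [exact (solution_nonneg b0 n d k r phi x Hb Hd (Rlt_le _ _ Hk) Hr Hphi Hsol t
                   ltac:(lra)) |].
  pose proof (solution_le_lyapunov_bound b0 n d k r phi x Hb Hd (Rlt_le _ _ Hk) Hr Hphi
    Hsol Hkd _ (fun s Hs => Rlt_le _ _ (Hlt s Hs)) t Ht).
  pose proof (Hlt 0 ltac:(lra)).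
  replace eps with (eps / (1 + k * b0 * r) * (1 + k * b0 * r)) by (field; lra).
  nra.
Qed.
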